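(* Let $M$ be a matroid on $E$, $\mathfrak{S}\subseteq\mathcal{P}(E)$, and $S\in\mathfrak{S}$ such that $M|_S$ is disconnected, say $M|_S=\bigoplus_i M|_{S_i}$. Suppose that for every $T\in\mathfrak{S}$ with $T\subseteq S$, each connected component of $M|_T$ also belongs to $\mathfrak{S}$. Then $a_{\mathfrak{S}}(S)=0$.
   Context: A matroid is connected if it is not a direct sum of two matroids on nonempty ground sets; connected components are the ground sets of the summands in the decomposition into connected matroids. For $\mathfrak{T}\subseteq\mathcal{P}(E)$ and $T\in\mathfrak{T}$: $c(T)=\#T-\mathrm{rk}\,T$ and $a_{\mathfrak{T}}(T)=c(T)-\sum_{U\in\mathfrak{T},U\subsetneq T}a_{\mathfrak{T}}(U)$ recursively, with $a_{\mathfrak{T}}(\varnothing)=0$. *)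

From mathcomp Require Import all_boot all_order all_algebra.
Set Implicit Arguments. Unset Strict Implicit. Unset Printing Implicit Defensive.

Record matroid (E : finType) := Matroid {
  rk : {set E} -> nat;
  rk_le_card : forall X : {set E}, rk X <= #|X|;
  rk_mono : forall X Y : {set E}, X \subset Y -> rk X <= rk Y;
  rk_submod : forall X Y : {set E}, rk (X :|: Y) + rk (X :&: Y) <= rk X + rk Y
}.

Section MatroidDefs.
Variables (E : finType) (M : matroid E).

(* M|_S is the direct sum of the restrictions to the blocks of the partition P of S *)
Definition restr_direct_sum (S : {set E}) (P : {set {set E}}) : Prop :=
  partition P S /\
  forall X : {set E}, X \subset S -> rk M X = \sum_(B in P) rk M (X :&: B).

Definition restr_connected (S : {set E}) : Prop :=
  ~ exists A B : {set E},
      [/\ A :|: B = S, A :&: B = set0, A != set0, B != set0 &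
          forall X : {set E}, X \subset S ->
            rk M X = rk M (X :&: A) + rk M (X :&: B)].

Definition component (T C : {set E}) : Prop :=
  exists P : {set {set E}},
    [/\ restr_direct_sum T P, (forall B, B \in P -> restr_connected B) & C \in P].

Definition nullity (T : {set E}) : int := (#|T|%:Z - (rk M T)%:Z)%R.

(* a_T(T) = c(T) - sum_{U in Tf, U proper subset of T} a_T(U), a(empty) = 0,
   computed by recursion with fuel (any fuel > #|T| gives the same value). *)
Fixpoint a_fuel (Tf : {set {set E}}) (n : nat) (T : {set E}) : int :=
  match n with
  | 0 => 0%R
  | n'.+1 =>
      if T == set0 then 0%R
      else (nullity T - \sum_(U in Tf | U \proper T) a_fuel Tf n' U)%R
  end.

Definition a_coef (Tf : {set {set E}}) (T : {set E}) : int :=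
  a_fuel Tf #|T|.+1 T.

End MatroidDefs.

(* Decompose M|_S into its connected components B_1, ..., B_k; they are
   proper subsets of S lying in Sf, and nullity is additive, so
   c(S) = sum_i c(B_i) = sum_i sum_{U in Sf, U <= B_i} a(U).  The recursion
   gives c(S) = a(S) + sum_{U in Sf, U < S} a(U).  A nonempty U < S that is
   contained in no B_i meets some B_i and leaves it, hence M|_U splits along
   B_i and a(U) = 0 by induction on #|S|; so both sums agree and a(S) = 0. *)

From mathcomp Require Import all_boot all_order all_algebra.
From Stdlib Require Import Classical.
Import GRing.Theory.

Set Implicit Arguments.
Unset Strict Implicit.
Unset Printing Implicit Defensive.

Lemma sum_proper_by_blocks (T : finType) (R : nmodType) (F : {set T} -> R)
    (Sf P : {set {set T}}) (S : {set T}) :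
  partition P S -> F set0 = 0%R -> (forall B, B \in P -> B \proper S) ->
  (forall U, U \in Sf -> U \proper S -> U != set0 ->
     (forall B, B \in P -> ~~ (U \subset B)) -> F U = 0%R) ->
  (\sum_(U in Sf | U \proper S) F U =
   \sum_(B in P) \sum_(U in Sf | U \subset B) F U)%R.
Proof.
move=> partP F0 properP offP; under [RHS]eq_bigr do rewrite big_mkcondr /=.
rewrite exchange_big /= [LHS]big_mkcondr /=; apply: eq_bigr => U USf.
have [->|U0] := eqVneq U set0.
  by rewrite F0 if_same big1 // => B _; rewrite if_same.
have [B0 /andP[B0P UB0]|noB] := pickP (fun B => (B \in P) && (U \subset B)).
  rewrite (sub_proper_trans UB0 (properP _ B0P)) (bigD1 B0) //= UB0 big1 ?addr0 //.
  move=> B /andP[BP BB0]; case: ifP => // UB; case/set0Pn: U0 => x xU.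
  have disjB : [disjoint B & B0] by apply: (trivIsetP (partition_trivIset partP)).
  by move: (disjointFr disjB (subsetP UB x xU)); rewrite (subsetP UB0 x xU).
rewrite big1 => [|B BP]; last by move: (noB B); rewrite BP /= => ->.
by case: ifP => // US; apply: offP => // B BP; move: (noB B); rewrite BP /= => ->.
Qed.

Section Matroid.
Variables (E : finType) (M : matroid E).

Lemma rk_set0 : rk M set0 = 0.
Proof. by apply/eqP; rewrite -leqn0 -(cards0 E) rk_le_card. Qed.

Lemma nullity_set0 : nullity M set0 = 0%R.
Proof. by rewrite /nullity cards0 rk_set0 subrr. Qed.

Lemma nullity_direct_sum (S : {set E}) (P : {set {set E}}) :
  restr_direct_sum M S P -> nullity M S = (\sum_(B in P) nullity M B)%R.
Proof.
move=> [partP rkP]; rewrite /nullity sumrB.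
rewrite -!(big_morph Posz PoszD (erefl (Posz 0))).
rewrite -(card_partition partP) (rkP S (subxx S)); congr (_ - Posz _)%R.
by apply: eq_bigr => B BP; rewrite (setIidPr (partitionS partP BP)).
Qed.

Section Coefficients.
Variable Sf : {set {set E}}.

Lemma a_fuel_enough (n m : nat) (T : {set E}) :
  #|T| < n -> #|T| < m -> a_fuel M Sf n T = a_fuel M Sf m T.
Proof.
elim: n m T => [|n IH] [|m] T //= ltTn ltTm; case: (T == set0) => //.
congr (_ - _)%R; apply: eq_bigr => U /andP[_ /proper_card ltUT].
by apply: IH; apply: leq_trans ltUT _.
Qed.

Lemma a_coef_set0 : a_coef M Sf set0 = 0%R.
Proof. by rewrite /a_coef /= eqxx. Qed.

Lemma a_coefE (T : {set E}) : T != set0 ->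
  a_coef M Sf T = (nullity M T - \sum_(U in Sf | U \proper T) a_coef M Sf U)%R.
Proof.
move=> T0; rewrite {1}/a_coef /= (negbTE T0); congr (_ - _)%R.
apply: eq_bigr => U /andP[_ /proper_card ltUT].
by apply: a_fuel_enough.
Qed.

Lemma sum_a_coef_subset (T : {set E}) : T \in Sf ->
  (\sum_(U in Sf | U \subset T) a_coef M Sf U)%R = nullity M T.
Proof.
move=> TSf; have [->|T0] := eqVneq T set0.
  rewrite nullity_set0 big1 // => U /andP[_]; rewrite subset0 => /eqP ->.
  exact: a_coef_set0.
rewrite (bigD1 T) /=; last by rewrite TSf subxx.
rewrite (eq_bigl (fun U => (U \in Sf) && (U \proper T))) ?a_coefE ?subrK // => U.
by rewrite properEneq -andbA [(U \subset T) && _]andbC.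
Qed.

End Coefficients.

Lemma direct_sum_set0 : restr_direct_sum M set0 set0.
Proof.
split; first by rewrite partition_set0.
by move=> X; rewrite subset0 => /eqP ->; rewrite big_set0 rk_set0.
Qed.

Lemma direct_sum_set1 (S : {set E}) : S != set0 -> restr_direct_sum M S [set S].
Proof.
move=> S0; split; first by rewrite /partition cover1 eqxx trivIset1 inE eq_sym S0.
by move=> X XS; rewrite big_set1 (setIidPl XS).
Qed.

Lemma direct_sum_split (A B : {set E}) (PA PB : {set {set E}}) :
  A :&: B = set0 ->
  (forall X : {set E}, X \subset A :|: B ->
     rk M X = rk M (X :&: A) + rk M (X :&: B)) ->
  restr_direct_sum M A PA -> restr_direct_sum M B PB ->
  restr_direct_sum M (A :|: B) (PA :|: PB).
Proof.
move=> AB0 rkAB [partA rkA] [partB rkB].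
have disjP : [disjoint PA & PB].
  apply/pred0P => C /=; apply/negP => /andP[CA CB].
  have := partition_neq0 partA CA; apply/negP; rewrite negbK -subset0 -AB0.
  by rewrite subsetI (partitionS partA CA) (partitionS partB CB).
have coverAB : cover (PA :|: PB) = A :|: B.
  rewrite /cover bigcup_setU -/(cover PA) -/(cover PB).
  by rewrite (cover_partition partA) (cover_partition partB).
split.
  rewrite /partition coverAB eqxx inE (partition0 partA) (partition0 partB).
  rewrite andbT; apply: trivIsetU; [exact: partition_trivIset partA|
                                      exact: partition_trivIset partB|].
  by rewrite (cover_partition partA) (cover_partition partB) -setI_eq0 AB0.
move=> X XAB; rewrite rkAB // rkA ?subsetIr // rkB ?subsetIr //.
rewrite [RHS](big_setID PA) setUK setDUl setDv set0U (setDidPl _) 1?disjoint_sym //.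
congr (_ + _); apply: eq_bigr => C CP; rewrite -setIA.
  by rewrite (setIidPr (partitionS partA CP)).
by rewrite (setIidPr (partitionS partB CP)).
Qed.

Lemma connected_decomposition (S : {set E}) : exists P : {set {set E}},
  restr_direct_sum M S P /\ forall B, B \in P -> restr_connected M B.
Proof.
elim: {S}_.+1 {-2}S (ltnSn #|S|) => // n IH S leSn.
have [->|S0] := eqVneq S set0.
  by exists set0; split=> [|B]; rewrite ?inE //; exact: direct_sum_set0.
have [Sconn|/NNPP [A [B [defS AB0 A0 B0 rkAB]]]] := classic (restr_connected M S).
  exists [set S]; split=> [|B]; first exact: direct_sum_set1.
  by rewrite inE => /eqP ->.
subst S.
have ltA : #|A| < n.
  rewrite -ltnS (leq_trans _ leSn) // ltnS; apply/proper_card/properUl.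
  by apply: contra B0 => /setIidPr <-; rewrite AB0.
have ltB : #|B| < n.
  rewrite -ltnS (leq_trans _ leSn) // ltnS; apply/proper_card/properUr.
  by apply: contra A0 => /setIidPl <-; rewrite AB0.
have [PA [sumA connA]] := IH A ltA.
have [PB [sumB connB]] := IH B ltB.
exists (PA :|: PB); split; first exact: direct_sum_split.
by move=> C; rewrite inE => /orP[/connA|/connB].
Qed.

Lemma restr_connected_set0 : restr_connected M set0.
Proof.
by case=> A [B [AB _ A0 _ _]]; move: A0; rewrite -subset0 -AB subsetUl.
Qed.

Lemma block_proper (S : {set E}) (P : {set {set E}}) (B : {set E}) :
  restr_direct_sum M S P -> (forall C, C \in P -> restr_connected M C) ->
  ~ restr_connected M S -> B \in P -> B \proper S.
Proof.
move=> [partP _] connP Snc BP; rewrite properEneq (partitionS partP BP) andbT.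
by apply/eqP => BS; apply: Snc; rewrite -BS; exact: connP.
Qed.

Lemma not_connected_off_blocks (S : {set E}) (P : {set {set E}}) (U : {set E}) :
  restr_direct_sum M S P -> U \subset S -> U != set0 ->
  (forall B, B \in P -> ~~ (U \subset B)) -> ~ restr_connected M U.
Proof.
move=> [partP rkP] US /set0Pn [x xU] offP.
have xP : x \in cover P by rewrite (cover_partition partP) (subsetP US).
set B0 := pblock P x; have B0P : B0 \in P := pblock_mem xP.
apply; exists (U :&: B0), (U :\: B0); split; rewrite ?setID ?setD_eq0 ?offP //.
- by apply/setP => y; rewrite !inE; case: (y \in B0); rewrite ?andbF.
- by apply/set0Pn; exists x; rewrite inE xU mem_pblock.
move=> X XU; have XS := subset_trans XU US.
have XDS : X :&: (U :\: B0) \subset S by rewrite (subset_trans _ XS) ?subsetIl.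
rewrite (rkP _ XS) (rkP _ XDS) (bigD1 B0) // [in RHS](bigD1 B0) //=.
have -> : X :&: (U :\: B0) :&: B0 = set0.
  by apply/setP => y; rewrite !inE; case: (y \in B0); rewrite ?andbF.
rewrite rk_set0 add0n setIA (setIidPl XU); congr (_ + _).
apply: eq_bigr => B /andP[BP BB0].
have disjB : [disjoint B & B0] by apply: (trivIsetP (partition_trivIset partP)).
apply/congr1/setP => y; rewrite !inE; case yB: (y \in B); rewrite ?andbF //.
by rewrite (disjointFr disjB yB) andbT; case yX: (y \in X); rewrite // (subsetP XU).
Qed.

End Matroid.

Theorem proposition6p5 (E : finType) (M : matroid E) (Sf : {set {set E}})
    (S : {set E}) :
  S \in Sf ->
  ~ restr_connected M S ->
  (forall T : {set E}, T \in Sf -> T \subset S ->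
     forall C : {set E}, component M T C -> C \in Sf) ->
  a_coef M Sf S = 0%R.
Proof.
elim: {S}_.+1 {-2}S (ltnSn #|S|) => // n IH S leSn SSf Snc closedSf.
have S0 : S != set0 by apply: contra_notN Snc => /eqP ->; exact: restr_connected_set0.
have [P [sumP connP]] := connected_decomposition M S.
have PSf B : B \in P -> B \in Sf.
  by move=> BP; apply: (closedSf S) => //; exists P.
rewrite a_coefE // (sum_proper_by_blocks (proj1 sumP) (a_coef_set0 M Sf)).
- rewrite (eq_bigr _ (fun B BP => sum_a_coef_subset M (PSf B BP))).
  by rewrite -(nullity_direct_sum sumP) subrr.
- by move=> B; apply: block_proper sumP connP Snc.
move=> U USf /[dup] /proper_sub US /proper_card ltUS U0 offP; apply: IH => //.
- by apply: leq_trans ltUS _; rewrite -ltnS.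
- exact: not_connected_off_blocks sumP US U0 offP.
by move=> T TSf TU; apply: closedSf => //; exact: subset_trans TU US.
Qed.
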